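(* Let $J=\{m,\dots,m+l-1\}$ with $(J,1)\in\mathcal I$. Let: - $w=a_m(0)=\dots=a_{m+l-1}(0)$; - $c_i=x^{-1}(a_i-w)\in\mathbb C[[x]]$ for $i\in J$; - $\mu=\tfrac12\min_{i\notin J}|a_i(0)-w|$. Let $0<r'\le\varepsilon$ be such that $|a_i(z)-a_i(0)|<\mu$ for all $z\in B_{r'}$ and all $i$. Let $z_0\in B_{r'}^*$. Then the loop $t\mapsto(a_1(e(t)z_0),\dots,a_d(e(t)z_0))$, $t\in[0,1]$, in $Y_d$ is homotopic (relative to its basepoint) to the concatenation of the loop $\lambda_{J,1}$ followed by the loop $$t\mapsto\Big((a_i(e(t)z_0))_{1\le i\le m-1},\ (w+z_0c_i(e(t)z_0))_{m\le i\le m+l-1},\ (a_i(e(t)z_0))_{m+l\le i\le d}\Big).$$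
   Context: **Setting.** Let $d\ge2$ and let $a_1,\dots,a_d\in\mathbb C[[x]]$ be distinct power series with positive radii of convergence. Let $\varepsilon>0$ be such that each $a_i$ converges on the closure of $B_\varepsilon=\{|z|<\varepsilon\}$ and $a_i(z)\ne a_j(z)$ for $0<|z|<\varepsilon$, $i\ne j$. Write $B_\rho^*=\{0<|z|<\rho\}$ and $e(t)=e^{2\pi\sqrt{-1}t}$. **Configuration space.** $Y_d=\mathbb C^d\smallsetminus\bigcup_{i<j}\{z_i=z_j\}$ is the ordered configuration space. **Clusters.** Let $e_{i,j}=v_x(a_i-a_j)$. $\mathcal I$ is the set of pairs $(I,n)$ with $I\subseteq\{1,\dots,d\}$, $|I|\ge2$, and $n\ge1$, such that $e_{i,j}\ge n$ for all distinct $i,j\in I$ and $I$ is maximal with this property. Assume the ordering of the $a_i$ is such that for each $m$, the map $i\mapsto e_{m,i}$ on $\{m+1,\dots,d\}$ is weakly decreasing. With this ordering every $I$ with $(I,n)\in\mathcal I$ is an interval $\{m,\dots,m+l-1\}$. For $(I,n)\in\mathcal I$ with $I=\{m,\dots,m+l-1\}$: - $b_{I,n}$ is the common truncation $\sum_{k<n}c_kx^k$ of the $a_i$, $i\in I$; - $w_{I,n}=b_{I,n}(z_0)$; - $\lambda_{I,n}$ is the loop in $Y_d$ $$t\mapsto\big((a_i(z_0))_{i<m},\ (w_{I,n}+e(t)(a_i(z_0)-w_{I,n}))_{i\in I},\ (a_i(z_0))_{i\ge m+l}\big),\quad t\in[0,1].$$ *)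

From Stdlib Require Import Reals Lra Lia ClassicalEpsilon.
Open Scope R_scope.

Definition Cx : Type := (R * R)%type.
Definition C0 : Cx := (0, 0).
Definition Cadd (z w : Cx) : Cx := (fst z + fst w, snd z + snd w).
Definition Csub (z w : Cx) : Cx := (fst z - fst w, snd z - snd w).
Definition Cmul (z w : Cx) : Cx :=
  (fst z * fst w - snd z * snd w, fst z * snd w + snd z * fst w).
Definition Cnorm (z : Cx) : R := sqrt (fst z * fst z + snd z * snd z).
Fixpoint Cpow (z : Cx) (n : nat) : Cx :=
  match n with O => (1, 0) | S k => Cmul z (Cpow z k) end.

Definition ee (t : R) : Cx := (cos (2 * PI * t), sin (2 * PI * t)).

(** Formal power series = coefficient sequences; partial sums and convergence. *)
Fixpoint Cpartial (s : nat -> Cx) (z : Cx) (n : nat) : Cx :=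
  match n with
  | O => Cmul (s O) (Cpow z O)
  | S k => Cadd (Cpartial s z k) (Cmul (s (S k)) (Cpow z (S k)))
  end.

Definition Cser_cv (s : nat -> Cx) (z : Cx) (L : Cx) : Prop :=
  forall eps, eps > 0 -> exists N : nat, forall n : nat, (n >= N)%nat ->
    Cnorm (Csub (Cpartial s z n) L) < eps.

(** The value of the power series s at z (its limit when it converges). *)
Definition psum (s : nat -> Cx) (z : Cx) : Cx :=
  epsilon (inhabits C0) (fun L => Cser_cv s z L).

(** v_x(a - b) >= n : the first n coefficients agree. *)
Definition val_ge (s t : nat -> Cx) (n : nat) : Prop :=
  forall k : nat, (k < n)%nat -> s k = t k.

Definition pairwise_ge (a : nat -> nat -> Cx) (I : nat -> Prop) (n : nat) : Prop :=
  forall i j, I i -> I j -> i <> j -> val_ge (a i) (a j) n.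

(** (I,n) is in the set \mathcal I (indices are 0-based: {0,...,d-1}). *)
Definition is_cluster (d : nat) (a : nat -> nat -> Cx) (I : nat -> Prop) (n : nat)
  : Prop :=
  (forall i, I i -> (i < d)%nat) /\
  (exists i j, I i /\ I j /\ i <> j) /\
  (n >= 1)%nat /\
  pairwise_ge a I n /\
  (forall I' : nat -> Prop, (forall i, I' i -> (i < d)%nat) ->
     (forall i, I i -> I' i) -> pairwise_ge a I' n -> forall i, I' i -> I i).

(** Points of Cx^d are functions nat -> Cx (only coordinates < d matter). *)
Definition in_Yd (d : nat) (p : nat -> Cx) : Prop :=
  forall i j, (i < d)%nat -> (j < d)%nat -> i <> j -> p i <> p j.

Definition in01 (t : R) : Prop := 0 <= t <= 1.

Definition cont_square (d : nat) (H : R -> R -> nat -> Cx) : Prop :=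
  forall i, (i < d)%nat -> forall s t, in01 s -> in01 t ->
    forall eps, eps > 0 -> exists delta, delta > 0 /\
      forall s' t', in01 s' -> in01 t' -> Rabs (s' - s) < delta -> Rabs (t' - t) < delta ->
        Cnorm (Csub (H s' t' i) (H s t i)) < eps.

Definition homotopic_rel (d : nat) (g1 g2 : R -> nat -> Cx) : Prop :=
  exists H : R -> R -> nat -> Cx,
    cont_square d H /\
    (forall s t, in01 s -> in01 t -> in_Yd d (H s t)) /\
    (forall t i, in01 t -> (i < d)%nat -> H 0 t i = g1 t i) /\
    (forall t i, in01 t -> (i < d)%nat -> H 1 t i = g2 t i) /\
    (forall s i, in01 s -> (i < d)%nat -> H s 0 i = g1 0 i) /\
    (forall s i, in01 s -> (i < d)%nat -> H s 1 i = g1 1 i).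

Definition concat (g1 g2 : R -> nat -> Cx) (t : R) : nat -> Cx :=
  if Rle_dec t (1/2) then g1 (2 * t) else g2 (2 * t - 1).

Definition inJ (m l i : nat) : Prop := (m <= i < m + l)%nat.
Definition inJb (m l i : nat) : bool := Nat.leb m i && Nat.ltb i (m + l).

(** The loop lambda_{J,1} at z0, with w_{J,1} = w. *)
Definition lambda_loop (a : nat -> nat -> Cx) (m l : nat) (w z0 : Cx) (t : R) : nat -> Cx :=
  fun i => if inJb m l i then Cadd w (Cmul (ee t) (Csub (psum (a i) z0) w))
           else psum (a i) z0.

Definition a_loop (a : nat -> nat -> Cx) (z0 : Cx) (t : R) : nat -> Cx :=
  fun i => psum (a i) (Cmul (ee t) z0).

(** The second loop: w + z0 c_i(e(t) z0) on J, with c_i = x^{-1}(a_i - w). *)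
Definition c_loop (a : nat -> nat -> Cx) (m l : nat) (w z0 : Cx) (t : R) : nat -> Cx :=
  fun i => if inJb m l i
           then Cadd w (Cmul z0 (psum (fun k => a i (S k)) (Cmul (ee t) z0)))
           else psum (a i) (Cmul (ee t) z0).

From Stdlib Require Import Reals Lra Lia Psatz ClassicalEpsilon.
Open Scope R_scope.

(* On the cluster J every a_i has constant term w, so a_i = w + x c_i and the i-th coordinate
   of the loop is w + e(t) z0 c_i(e(t) z0): the rotation e(t) enters twice, as a factor and in
   the argument of c_i.  Turning the factor by e(alpha) and the argument by e(beta) gives a map of
   the torus whose diagonal is the loop; the homotopy slides the diagonal onto the path that first
   turns the factor (this is lambda_{J,1}) and then the argument (the second loop).  Throughout,
   two J-coordinates differ by the nonzero factor e(alpha) z0 / (e(beta) z0) times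
   a_i(e(beta) z0) - a_j(e(beta) z0), and each stays within mu of w, while every other coordinate
   a_k stays within mu of a_k(0), at distance at least 2 mu from w; so the configuration never
   leaves Y_d. *)

Ltac Cring := apply injective_projections; unfold Cadd, Csub, Cmul, C0; cbn [fst snd]; ring.

Definition Cinv (u : Cx) : Cx :=
  (fst u / (fst u * fst u + snd u * snd u), - snd u / (fst u * fst u + snd u * snd u)).

Lemma Cnorm_ge0 x : 0 <= Cnorm x.
Proof. apply sqrt_pos. Qed.

Lemma Cnorm_mul x y : Cnorm (Cmul x y) = Cnorm x * Cnorm y.
Proof.
  unfold Cnorm. rewrite <- sqrt_mult by nra. f_equal.
  unfold Cmul; cbn [fst snd]. ring.
Qed.

Lemma Cnorm_triang x y : Cnorm (Cadd x y) <= Cnorm x + Cnorm y.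
Proof.
  destruct x as [x1 x2], y as [y1 y2]; unfold Cnorm, Cadd; cbn [fst snd].
  set (u := sqrt (x1 * x1 + x2 * x2)); set (v := sqrt (y1 * y1 + y2 * y2)).
  assert (Hu : u * u = x1 * x1 + x2 * x2) by (apply sqrt_sqrt; nra).
  assert (Hv : v * v = y1 * y1 + y2 * y2) by (apply sqrt_sqrt; nra).
  assert (u0 : 0 <= u) by apply sqrt_pos. assert (v0 : 0 <= v) by apply sqrt_pos.
  (* Cauchy-Schwarz, from Lagrange's identity *)
  assert (Hcs : x1 * y1 + x2 * y2 <= u * v).
  { assert (Hlag : (u * v) * (u * v) - (x1 * y1 + x2 * y2) * (x1 * y1 + x2 * y2)
                   = (x1 * y2 - x2 * y1) * (x1 * y2 - x2 * y1))
      by (replace ((u * v) * (u * v)) with ((u * u) * (v * v)) by ring; rewrite Hu, Hv; ring).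
    assert (0 <= u * v) by nra.
    destruct (Rle_lt_dec (x1 * y1 + x2 * y2) (u * v)); [auto | exfalso].
    pose proof (Rle_0_sqr (x1 * y2 - x2 * y1)); unfold Rsqr in *; nra. }
  rewrite <- (sqrt_square (u + v)) by lra.
  apply sqrt_le_1_alt. nra.
Qed.

Lemma Cnorm_triang_sub x y z : Cnorm (Csub x z) <= Cnorm (Csub x y) + Cnorm (Csub y z).
Proof.
  replace (Csub x z) with (Cadd (Csub x y) (Csub y z)) by Cring. apply Cnorm_triang.
Qed.

Lemma Cnorm_sub_sym x y : Cnorm (Csub x y) = Cnorm (Csub y x).
Proof. unfold Cnorm, Csub; cbn [fst snd]. f_equal. ring. Qed.

Lemma Cnorm_C0 : Cnorm C0 = 0.
Proof. unfold Cnorm, C0; cbn [fst snd]. rewrite Rmult_0_l, Rplus_0_l. apply sqrt_0. Qed.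

Lemma Cnorm_sub_same x : Cnorm (Csub x x) = 0.
Proof. replace (Csub x x) with C0 by Cring. apply Cnorm_C0. Qed.

Lemma Cnorm_eq0 x : Cnorm x = 0 -> x = C0.
Proof.
  destruct x as [p q]; unfold Cnorm, C0; cbn [fst snd]; intro H.
  apply sqrt_eq_0 in H; [|nra]. f_equal; nra.
Qed.

Lemma Cnorm_sub_eq0 x y : Cnorm (Csub x y) = 0 -> x = y.
Proof.
  intro H. apply Cnorm_eq0 in H. destruct x, y; unfold Csub, C0 in H; cbn in H.
  injection H; intros; f_equal; lra.
Qed.

Lemma Cnorm_neq0 x : 0 < Cnorm x -> x <> C0.
Proof. intros H ->. rewrite Cnorm_C0 in H. lra. Qed.

Lemma Cnorm_pos x : x <> C0 -> 0 < Cnorm x.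
Proof.
  intro Hx. destruct (Cnorm_ge0 x) as [|E]; auto.
  symmetry in E. apply Cnorm_eq0 in E. contradiction.
Qed.

Lemma Cnorm_le_abs x : Cnorm x <= Rabs (fst x) + Rabs (snd x).
Proof.
  destruct x as [p q]; unfold Cnorm; cbn [fst snd].
  pose proof (Rabs_pos p); pose proof (Rabs_pos q).
  rewrite <- (sqrt_square (Rabs p + Rabs q)) by lra. apply sqrt_le_1_alt.
  assert (Rabs p * Rabs p = p * p) by (rewrite <- Rabs_mult; apply Rabs_right; nra).
  assert (Rabs q * Rabs q = q * q) by (rewrite <- Rabs_mult; apply Rabs_right; nra).
  nra.
Qed.

Lemma Cnorm_one : Cnorm (1, 0) = 1.
Proof. unfold Cnorm; cbn [fst snd]. replace (1 * 1 + 0 * 0) with 1 by ring. apply sqrt_1. Qed.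

Lemma Cnorm_pow z n : Cnorm (Cpow z n) = Cnorm z ^ n.
Proof. induction n; cbn [Cpow pow]; [apply Cnorm_one | rewrite Cnorm_mul, IHn; ring]. Qed.

Lemma Cmul_1l x : Cmul (1, 0) x = x.
Proof. Cring. Qed.

Lemma Cmul_assoc x y z : Cmul x (Cmul y z) = Cmul (Cmul x y) z.
Proof. Cring. Qed.

Lemma Cnorm2_neq0 u : u <> C0 -> fst u * fst u + snd u * snd u <> 0.
Proof. destruct u as [p q]; cbn [fst snd]; intros Hu E; apply Hu; unfold C0; f_equal; nra. Qed.

Lemma Cmul_Cinv_l u x : u <> C0 -> Cmul (Cinv u) (Cmul u x) = x.
Proof.
  intro Hu. pose proof (Cnorm2_neq0 u Hu).
  apply injective_projections; unfold Cinv, Cmul; cbn [fst snd]; field; auto.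
Qed.

Lemma Cmul_Cinv_r u x : u <> C0 -> Cmul u (Cmul (Cinv u) x) = x.
Proof.
  intro Hu. pose proof (Cnorm2_neq0 u Hu).
  apply injective_projections; unfold Cinv, Cmul; cbn [fst snd]; field; auto.
Qed.

Lemma Cnorm_Cinv u : u <> C0 -> Cnorm (Cinv u) = / Cnorm u.
Proof.
  intro Hu. pose proof (Cnorm_pos u Hu).
  apply (Rmult_eq_reg_r (Cnorm u)); [|lra]. rewrite <- Cnorm_mul, Rinv_l by lra.
  rewrite <- Cnorm_one. f_equal.
  rewrite <- (Cmul_Cinv_l u (1, 0)) by auto. f_equal. Cring.
Qed.

Lemma Cinv_sub u v : u <> C0 -> v <> C0 ->
  Csub (Cinv u) (Cinv v) = Cmul (Cmul (Cinv u) (Cinv v)) (Csub v u).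
Proof.
  intros Hu Hv. pose proof (Cnorm2_neq0 u Hu). pose proof (Cnorm2_neq0 v Hv).
  apply injective_projections; unfold Cinv, Cmul, Csub; cbn [fst snd]; field; auto.
Qed.

Lemma Cnorm_ee t : Cnorm (ee t) = 1.
Proof.
  unfold Cnorm, ee; cbn [fst snd]. rewrite <- sqrt_1. f_equal.
  pose proof (sin2_cos2 (2 * PI * t)). unfold Rsqr in *. lra.
Qed.

Lemma ee0 : ee 0 = (1, 0).
Proof. unfold ee. rewrite Rmult_0_r, cos_0, sin_0. reflexivity. Qed.

Lemma ee1 : ee 1 = (1, 0).
Proof. unfold ee. rewrite Rmult_1_r, cos_2PI, sin_2PI. reflexivity. Qed.

Lemma ee_neq0 u : ee u <> C0.
Proof. apply Cnorm_neq0. rewrite Cnorm_ee. lra. Qed.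

Lemma Cnorm_ee_mul t z : Cnorm (Cmul (ee t) z) = Cnorm z.
Proof. rewrite Cnorm_mul, Cnorm_ee. ring. Qed.

Definition ccont {X : Type} (D : X -> Prop) (dist : X -> X -> R) (f : X -> Cx) (x : X) : Prop :=
  forall e, e > 0 -> exists del, del > 0 /\
    forall y, D y -> dist y x < del -> Cnorm (Csub (f y) (f x)) < e.

Definition cdist (y x : Cx) : R := Cnorm (Csub y x).

Section Continuity.
Context {X : Type} (D : X -> Prop) (dist : X -> X -> R).

Lemma ccont_ext f g x : (forall y, f y = g y) -> ccont D dist f x -> ccont D dist g x.
Proof.
  intros E Hf e He. destruct (Hf e He) as [del [Hdel H]]. exists del. now setoid_rewrite <- E.
Qed.

Lemma ccont_const c x : ccont D dist (fun _ => c) x.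
Proof. intros e He. exists 1. split; [lra|]. intros. rewrite Cnorm_sub_same. lra. Qed.

Lemma ccont_add f g x : ccont D dist f x -> ccont D dist g x ->
  ccont D dist (fun y => Cadd (f y) (g y)) x.
Proof.
  intros Hf Hg e He.
  destruct (Hf (e / 2)) as [d1 [Hd1 H1]]; [lra|]. destruct (Hg (e / 2)) as [d2 [Hd2 H2]]; [lra|].
  exists (Rmin d1 d2). split; [now apply Rmin_pos|]. intros y Dy Hy.
  replace (Csub (Cadd (f y) (g y)) (Cadd (f x) (g x)))
    with (Cadd (Csub (f y) (f x)) (Csub (g y) (g x))) by Cring.
  specialize (H1 y Dy (Rlt_le_trans _ _ _ Hy (Rmin_l _ _))).
  specialize (H2 y Dy (Rlt_le_trans _ _ _ Hy (Rmin_r _ _))).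
  pose proof (Cnorm_triang (Csub (f y) (f x)) (Csub (g y) (g x))). lra.
Qed.

Lemma ccont_mul f g x : ccont D dist f x -> ccont D dist g x ->
  ccont D dist (fun y => Cmul (f y) (g y)) x.
Proof.
  intros Hf Hg e He.
  set (A := Cnorm (f x) + 1); set (B := Cnorm (g x) + 1).
  assert (HA : 0 < A) by (pose proof (Cnorm_ge0 (f x)); unfold A; lra).
  assert (HB : 0 < B) by (pose proof (Cnorm_ge0 (g x)); unfold B; lra).
  destruct (Hf (e / (2 * B))) as [d1 [Hd1 H1]]; [apply Rdiv_lt_0_compat; lra|].
  destruct (Hg (Rmin 1 (e / (2 * A)))) as [d2 [Hd2 H2]].
  { apply Rmin_pos; [lra | apply Rdiv_lt_0_compat; lra]. }
  exists (Rmin d1 d2). split; [now apply Rmin_pos|]. intros y Dy Hy.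
  replace (Csub (Cmul (f y) (g y)) (Cmul (f x) (g x)))
    with (Cadd (Cmul (Csub (f y) (f x)) (g y)) (Cmul (f x) (Csub (g y) (g x)))) by Cring.
  eapply Rle_lt_trans; [apply Cnorm_triang|]. rewrite !Cnorm_mul.
  specialize (H1 y Dy (Rlt_le_trans _ _ _ Hy (Rmin_l _ _))).
  specialize (H2 y Dy (Rlt_le_trans _ _ _ Hy (Rmin_r _ _))).
  pose proof (Rmin_l 1 (e / (2 * A))); pose proof (Rmin_r 1 (e / (2 * A))).
  assert (Hgy : Cnorm (g y) <= B).
  { pose proof (Cnorm_triang (Csub (g y) (g x)) (g x)) as T.
    replace (Cadd (Csub (g y) (g x)) (g x)) with (g y) in T by Cring. unfold B; lra. }
  assert (T1 : Cnorm (Csub (f y) (f x)) * Cnorm (g y) <= e / 2).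
  { replace (e / 2) with (e / (2 * B) * B) by (field; lra).
    apply Rmult_le_compat; try apply Cnorm_ge0; lra. }
  assert (T2 : Cnorm (f x) * Cnorm (Csub (g y) (g x)) < e / 2).
  { apply Rle_lt_trans with (A * Cnorm (Csub (g y) (g x))).
    - apply Rmult_le_compat_r; [apply Cnorm_ge0 | unfold A; lra].
    - replace (e / 2) with (A * (e / (2 * A))) by (field; lra).
      apply Rmult_lt_compat_l; lra. }
  lra.
Qed.

Lemma ccont_sub f g x : ccont D dist f x -> ccont D dist g x ->
  ccont D dist (fun y => Csub (f y) (g y)) x.
Proof.
  intros Hf Hg. apply (ccont_ext (fun y => Cadd (f y) (Cmul (-1, 0) (g y)))); [intro; Cring|].
  apply ccont_add, ccont_mul, Hg; [exact Hf | apply ccont_const].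
Qed.

Lemma ccont_comp (Dg : Cx -> Prop) (g : Cx -> Cx) f x :
  (forall y, D y -> Dg (f y)) ->
  ccont Dg cdist g (f x) -> ccont D dist f x -> ccont D dist (fun y => g (f y)) x.
Proof.
  intros HD Hg Hf e He. destruct (Hg e He) as [d1 [Hd1 H1]].
  destruct (Hf d1 Hd1) as [d2 [Hd2 H2]]. exists d2. split; [exact Hd2|].
  intros y Dy Hy. apply H1; [apply HD; exact Dy | apply H2; assumption].
Qed.

End Continuity.

Lemma ccont_id D x : ccont D cdist (fun z => z) x.
Proof. intros e He. exists e. split; auto. Qed.

Lemma ccont_pow D n x : ccont D cdist (fun z => Cpow z n) x.
Proof. induction n; cbn [Cpow]; [apply ccont_const | apply ccont_mul; auto; apply ccont_id]. Qed.

Lemma ccont_Cpartial D s n x : ccont D cdist (fun z => Cpartial s z n) x.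
Proof.
  induction n; cbn [Cpartial].
  - apply ccont_mul; [apply ccont_const | apply ccont_pow].
  - apply ccont_add; auto. apply ccont_mul; [apply ccont_const | apply ccont_pow].
Qed.

Lemma ccont_Cinv_circle rho x : 0 < rho -> Cnorm x = rho ->
  ccont (fun z => Cnorm z = rho) cdist Cinv x.
Proof.
  intros Hrho Hx e He. exists (e * rho * rho). split; [apply Rmult_lt_0_compat; nra|].
  intros y Hy Hyx; unfold cdist in Hyx.
  assert (Hy0 : y <> C0) by (apply Cnorm_neq0; lra).
  assert (Hx0 : x <> C0) by (apply Cnorm_neq0; lra).
  rewrite Cinv_sub, !Cnorm_mul, !Cnorm_Cinv, Cnorm_sub_sym, Hx, Hy by auto.
  apply (Rmult_lt_reg_r (rho * rho)); [nra|].
  replace (/ rho * / rho * Cnorm (Csub y x) * (rho * rho)) with (Cnorm (Csub y x)) by (field; lra).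
  lra.
Qed.

Lemma psum_spec s z : (exists L, Cser_cv s z L) -> Cser_cv s z (psum s z).
Proof. intro H. unfold psum. apply epsilon_spec, H. Qed.

Lemma Cser_cv_unique s z L1 L2 : Cser_cv s z L1 -> Cser_cv s z L2 -> L1 = L2.
Proof.
  intros H1 H2. apply Cnorm_sub_eq0.
  destruct (Cnorm_ge0 (Csub L1 L2)) as [Hpos|]; [exfalso|auto].
  destruct (H1 (Cnorm (Csub L1 L2) / 2)) as [N1 HN1]; [lra|].
  destruct (H2 (Cnorm (Csub L1 L2) / 2)) as [N2 HN2]; [lra|].
  specialize (HN1 (max N1 N2) ltac:(lia)); specialize (HN2 (max N1 N2) ltac:(lia)).
  pose proof (Cnorm_triang_sub L1 (Cpartial s z (max N1 N2)) L2).
  rewrite (Cnorm_sub_sym L1 (Cpartial s z (max N1 N2))) in H. lra.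
Qed.

Lemma psum_eq s z L : Cser_cv s z L -> psum s z = L.
Proof. intro H. apply (Cser_cv_unique s z); [apply psum_spec; eauto | exact H]. Qed.

Lemma Cser_cv_dist_le s z L n B : Cser_cv s z L ->
  (forall k, (k >= n)%nat -> Cnorm (Csub (Cpartial s z k) (Cpartial s z n)) <= B) ->
  Cnorm (Csub L (Cpartial s z n)) <= B.
Proof.
  intros HL HB. destruct (Rle_lt_dec (Cnorm (Csub L (Cpartial s z n))) B) as [|Hgt]; auto.
  exfalso. destruct (HL (Cnorm (Csub L (Cpartial s z n)) - B)) as [N HN]; [lra|].
  specialize (HN (max N n) ltac:(lia)); specialize (HB (max N n) ltac:(lia)).
  pose proof (Cnorm_triang_sub L (Cpartial s z (max N n)) (Cpartial s z n)).
  rewrite (Cnorm_sub_sym (Cpartial s z (max N n)) L) in HN. lra.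
Qed.

Lemma Cpartial_S_sub s z n :
  Csub (Cpartial s z (S n)) (Cpartial s z n) = Cmul (s (S n)) (Cpow z (S n)).
Proof. cbn [Cpartial]. Cring. Qed.

Lemma finite_prefix_bounded (g : nat -> R) N : exists M, forall k, (k <= N)%nat -> g k <= M.
Proof.
  induction N as [|N [M HM]].
  - exists (g 0%nat). intros k Hk. replace k with 0%nat by lia. lra.
  - exists (Rmax M (g (S N))). intros k Hk.
    destruct (Nat.eq_dec k (S N)) as [->|]; [apply Rmax_r|].
    eapply Rle_trans; [apply HM; lia | apply Rmax_l].
Qed.

Lemma Cser_cv_terms_bounded s z L : Cser_cv s z L ->
  exists M, forall n, Cnorm (Cmul (s n) (Cpow z n)) <= M.
Proof.
  intro HL. destruct (HL 1) as [N HN]; [lra|].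
  destruct (finite_prefix_bounded (fun k => Cnorm (Cmul (s k) (Cpow z k))) N) as [M HM].
  exists (Rmax M 2). intro n. destruct (Compare_dec.le_lt_dec n N).
  - eapply Rle_trans; [apply HM; auto | apply Rmax_l].
  - destruct n as [|n]; [lia|]. rewrite <- Cpartial_S_sub.
    eapply Rle_trans; [|apply Rmax_r].
    pose proof (Cnorm_triang_sub (Cpartial s z (S n)) L (Cpartial s z n)).
    pose proof (HN (S n) ltac:(lia)); pose proof (HN n ltac:(lia)).
    rewrite (Cnorm_sub_sym (Cpartial s z n) L) in H1. lra.
Qed.

Section GeometricTail.
Variables (s : nat -> Cx) (z : Cx) (M q : R).
Hypothesis Hq : 0 <= q < 1.
Hypothesis Hterm : forall k, Cnorm (Cmul (s k) (Cpow z k)) <= M * q ^ k.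

Lemma Cpartial_dist_geom n k :
  Cnorm (Csub (Cpartial s z (n + k)) (Cpartial s z n)) <= M * (q ^ S n - q ^ S (n + k)) / (1 - q).
Proof.
  induction k as [|k IHk].
  - rewrite Nat.add_0_r, Cnorm_sub_same. apply Req_le. field. lra.
  - rewrite Nat.add_succ_r.
    replace (Csub (Cpartial s z (S (n + k))) (Cpartial s z n))
      with (Cadd (Csub (Cpartial s z (n + k)) (Cpartial s z n))
                 (Csub (Cpartial s z (S (n + k))) (Cpartial s z (n + k)))) by Cring.
    eapply Rle_trans; [apply Cnorm_triang|]. rewrite Cpartial_S_sub.
    pose proof (Hterm (S (n + k))).
    replace (M * (q ^ S n - q ^ S (S (n + k))) / (1 - q))
      with (M * (q ^ S n - q ^ S (n + k)) / (1 - q) + M * q ^ S (n + k)) by (cbn [pow]; field; lra).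
    lra.
Qed.

Lemma psum_tail_geom n : (exists L, Cser_cv s z L) ->
  Cnorm (Csub (psum s z) (Cpartial s z n)) <= M * q ^ S n / (1 - q).
Proof.
  intro Hcv. apply Cser_cv_dist_le; [now apply psum_spec|]. intros k Hk.
  replace k with (n + (k - n))%nat by lia.
  eapply Rle_trans; [apply Cpartial_dist_geom|].
  assert (0 <= M).
  { pose proof (Hterm 0%nat). pose proof (Cnorm_ge0 (Cmul (s 0%nat) (Cpow z 0%nat))).
    cbn [pow] in *. lra. }
  pose proof (pow_le q (S (n + (k - n))) (proj1 Hq)).
  unfold Rdiv. apply Rmult_le_compat_r; [left; apply Rinv_0_lt_compat; lra | nra].
Qed.

End GeometricTail.

Lemma geom_tail_small M q e : 0 <= M -> 0 <= q < 1 -> 0 < e ->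
  exists N, M * q ^ S N / (1 - q) < e.
Proof.
  intros HM Hq He.
  destruct (pow_lt_1_zero q ltac:(rewrite Rabs_right; lra) (e * (1 - q) / (M + 1))) as [N HN].
  { apply Rdiv_lt_0_compat; nra. }
  exists N. specialize (HN N (le_n N)). rewrite Rabs_right in HN by (apply Rle_ge, pow_le; lra).
  pose proof (pow_le q N (proj1 Hq)).
  apply (Rmult_lt_reg_r (1 - q)); [lra|].
  unfold Rdiv. rewrite Rmult_assoc, Rinv_l, Rmult_1_r by lra.
  cbn [pow]. apply (Rmult_lt_compat_r (M + 1)) in HN; [|lra].
  replace (e * (1 - q) / (M + 1) * (M + 1)) with (e * (1 - q)) in HN by (field; lra).
  assert (0 <= M * q ^ N) by (apply Rmult_le_pos; lra). nra.
Qed.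

Lemma ccont_psum s r0 rho : 0 <= rho < r0 ->
  (forall z, Cnorm z <= r0 -> exists L, Cser_cv s z L) ->
  forall z, Cnorm z <= rho -> ccont (fun y => Cnorm y <= rho) cdist (psum s) z.
Proof.
  intros Hrho Hc z Hz.
  (* Weierstrass M-test: the terms at the point r0 dominate those on the disc of radius rho *)
  assert (Hr0 : Cnorm (r0, 0) = r0).
  { unfold Cnorm; cbn [fst snd]. rewrite Rmult_0_l, Rplus_0_r. apply sqrt_square. lra. }
  destruct (Hc (r0, 0) ltac:(lra)) as [L HL].
  destruct (Cser_cv_terms_bounded _ _ _ HL) as [M0 HM0].
  set (M := Rmax M0 0); set (q := rho / r0).
  assert (Hq : 0 <= q < 1).
  { unfold q; split; [apply Rmult_le_pos; [lra | left; apply Rinv_0_lt_compat; lra]|].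
    apply (Rmult_lt_reg_r r0); [lra|]. field_simplify; lra. }
  assert (Hterm : forall y, Cnorm y <= rho -> forall k, Cnorm (Cmul (s k) (Cpow y k)) <= M * q ^ k).
  { intros y Hy k. specialize (HM0 k). rewrite Cnorm_mul, Cnorm_pow, Hr0 in HM0.
    rewrite Cnorm_mul, Cnorm_pow.
    apply Rle_trans with (Cnorm (s k) * rho ^ k).
    - apply Rmult_le_compat_l; [apply Cnorm_ge0|].
      apply pow_incr. split; [apply Cnorm_ge0 | exact Hy].
    - replace rho with (r0 * q) by (unfold q; field; lra). rewrite Rpow_mult_distr, <- Rmult_assoc.
      apply Rmult_le_compat_r; [apply pow_le; lra|]. eapply Rle_trans; [exact HM0 | apply Rmax_l]. }
  intros e He.
  destruct (geom_tail_small M q (e / 3)) as [N HN]; [apply Rmax_r | exact Hq | lra|].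
  destruct (ccont_Cpartial (fun y => Cnorm y <= rho) s N z (e / 3)) as [del [Hdel Hpart]]; [lra|].
  exists del. split; [exact Hdel|]. intros y Hy Hyz.
  specialize (Hpart y Hy Hyz).
  pose proof (psum_tail_geom s y M q Hq (Hterm y ltac:(assumption)) N (Hc y ltac:(lra))).
  pose proof (psum_tail_geom s z M q Hq (Hterm z ltac:(assumption)) N (Hc z ltac:(lra))).
  pose proof (Cnorm_triang_sub (psum s y) (Cpartial s y N) (psum s z)).
  pose proof (Cnorm_triang_sub (Cpartial s y N) (Cpartial s z N) (psum s z)).
  rewrite (Cnorm_sub_sym (Cpartial s z N) (psum s z)) in H2. lra.
Qed.

Lemma Cpartial_shift s z n :
  Cpartial s z (S n) = Cadd (s O) (Cmul z (Cpartial (fun k => s (S k)) z n)).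
Proof.
  induction n as [|n IHn].
  - cbn [Cpartial Cpow]. Cring.
  - change (Cpartial s z (S (S n)))
      with (Cadd (Cpartial s z (S n)) (Cmul (s (S (S n))) (Cpow z (S (S n))))).
    rewrite IHn. cbn [Cpartial Cpow]. Cring.
Qed.

Lemma psum_shift s z : z <> C0 -> (exists L, Cser_cv s z L) ->
  psum (fun k => s (S k)) z = Cmul (Cinv z) (Csub (psum s z) (s O)).
Proof.
  intros Hz Hcv. apply psum_eq. pose proof (psum_spec s z Hcv) as HL.
  set (c := Cinv z). intros e He.
  pose proof (Cnorm_ge0 c).
  destruct (HL (e / (Cnorm c + 1))) as [N HN]; [apply Rdiv_lt_0_compat; lra|].
  exists N. intros n Hn.
  replace (Csub (Cpartial (fun k => s (S k)) z n) (Cmul c (Csub (psum s z) (s O))))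
    with (Cmul c (Csub (Cpartial s z (S n)) (psum s z))).
  2: { rewrite Cpartial_shift. unfold c.
       rewrite <- (Cmul_Cinv_l z (Cpartial (fun k => s (S k)) z n) Hz) at 2. Cring. }
  rewrite Cnorm_mul. specialize (HN (S n) ltac:(lia)). pose proof (Cnorm_ge0 c).
  apply Rle_lt_trans with (Cnorm c * (e / (Cnorm c + 1))); [apply Rmult_le_compat_l; lra|].
  apply (Rmult_lt_reg_r (Cnorm c + 1)); [lra|].
  replace (Cnorm c * (e / (Cnorm c + 1)) * (Cnorm c + 1)) with (Cnorm c * e) by (field; lra). nra.
Qed.

Lemma psum_C0 s : psum s C0 = s O.
Proof.
  apply psum_eq. intros e He. exists 0%nat. intros n _.
  replace (Cpartial s C0 n) with (s O); [rewrite Cnorm_sub_same; lra|].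
  induction n as [|n IHn]; cbn [Cpartial Cpow]; [Cring|].
  rewrite <- IHn. Cring.
Qed.

Definition in_square (p : R * R) : Prop := in01 (fst p) /\ in01 (snd p).
Definition sup_dist (p q : R * R) : R := Rmax (Rabs (fst p - fst q)) (Rabs (snd p - snd q)).

(* Rotation parameters of the homotopy: on the side s = 0 both equal t (the diagonal of the
   torus); on the side s = 1 first sq_alpha runs through [0, 1] with sq_beta = 0, then sq_beta
   does with sq_alpha = 1. *)
Definition sq_alpha (p : R * R) : R := Rmin 1 ((1 + fst p) * snd p).
Definition sq_beta (p : R * R) : R := Rmax 0 ((1 + fst p) * snd p - fst p).

Ltac sq_edge := unfold sq_alpha, sq_beta, Rmin, Rmax, in01 in *; cbn [fst snd];
  split; destruct (Rle_dec _ _); lra.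

Lemma sq_edge_s0 t : in01 t -> sq_alpha (0, t) = t /\ sq_beta (0, t) = t.
Proof. intro; sq_edge. Qed.

Lemma sq_edge_t0 s : in01 s -> sq_alpha (s, 0) = 0 /\ sq_beta (s, 0) = 0.
Proof. intro; sq_edge. Qed.

Lemma sq_edge_t1 s : in01 s -> sq_alpha (s, 1) = 1 /\ sq_beta (s, 1) = 1.
Proof. intro; sq_edge. Qed.

Lemma sq_edge_s1_first t : 0 <= t <= 1 / 2 -> sq_alpha (1, t) = 2 * t /\ sq_beta (1, t) = 0.
Proof. intro; sq_edge. Qed.

Lemma sq_edge_s1_second t : 1 / 2 < t <= 1 -> sq_alpha (1, t) = 1 /\ sq_beta (1, t) = 2 * t - 1.
Proof. intro; sq_edge. Qed.

Lemma Rmin_lip c x y : Rabs (Rmin c x - Rmin c y) <= Rabs (x - y).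
Proof. unfold Rmin, Rabs; repeat destruct Rle_dec; repeat destruct Rcase_abs; lra. Qed.

Lemma Rmax_lip c x y : Rabs (Rmax c x - Rmax c y) <= Rabs (x - y).
Proof. unfold Rmax, Rabs; repeat destruct Rle_dec; repeat destruct Rcase_abs; lra. Qed.

Lemma sq_prod_lip p q : in_square p -> in_square q ->
  Rabs ((1 + fst p) * snd p - (1 + fst q) * snd q) <= 3 * sup_dist p q.
Proof.
  destruct p as [s t], q as [s' t']; unfold in_square, in01, sup_dist; cbn [fst snd].
  intros [Hs Ht] [Hs' Ht'].
  replace ((1 + s) * t - (1 + s') * t') with ((s - s') * t + (1 + s') * (t - t')) by ring.
  eapply Rle_trans; [apply Rabs_triang|]. rewrite !Rabs_mult.
  rewrite (Rabs_right t), (Rabs_right (1 + s')) by lra.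
  pose proof (Rmax_l (Rabs (s - s')) (Rabs (t - t'))).
  pose proof (Rmax_r (Rabs (s - s')) (Rabs (t - t'))).
  pose proof (Rabs_pos (s - s')). pose proof (Rabs_pos (t - t')). nra.
Qed.

Lemma sq_alpha_lip p q : in_square p -> in_square q ->
  Rabs (sq_alpha p - sq_alpha q) <= 4 * sup_dist p q.
Proof.
  intros Hp Hq. unfold sq_alpha. eapply Rle_trans; [apply Rmin_lip|].
  pose proof (sq_prod_lip p q Hp Hq).
  pose proof (Rmax_l (Rabs (fst p - fst q)) (Rabs (snd p - snd q))).
  pose proof (Rabs_pos (fst p - fst q)). unfold sup_dist in *. lra.
Qed.

Lemma sq_beta_lip p q : in_square p -> in_square q ->
  Rabs (sq_beta p - sq_beta q) <= 4 * sup_dist p q.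
Proof.
  intros Hp Hq. unfold sq_beta. eapply Rle_trans; [apply Rmax_lip|].
  replace ((1 + fst p) * snd p - fst p - ((1 + fst q) * snd q - fst q))
    with (((1 + fst p) * snd p - (1 + fst q) * snd q) - (fst p - fst q)) by ring.
  eapply Rle_trans; [apply Rabs_triang|]. rewrite Rabs_Ropp.
  pose proof (sq_prod_lip p q Hp Hq).
  pose proof (Rmax_l (Rabs (fst p - fst q)) (Rabs (snd p - snd q))).
  unfold sup_dist in *. lra.
Qed.

Lemma continuity_pt_ball (f : R -> R) u e : continuity f -> e > 0 ->
  exists del, del > 0 /\ forall v, Rabs (v - u) < del -> Rabs (f v - f u) < e.
Proof.
  intros Hf He. destruct (Hf u e He) as [del [Hdel H]]. exists del. split; [exact Hdel|].
  intros v Hv. destruct (Req_dec v u) as [->|Hvu]; [rewrite Rminus_diag, Rabs_R0; lra|].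
  apply (H v). split; [split; [exact I | auto] | exact Hv].
Qed.

Lemma ee_cont u e : e > 0 -> exists del, del > 0 /\
  forall v, Rabs (v - u) < del -> Cnorm (Csub (ee v) (ee u)) < e.
Proof.
  intro He. pose proof PI_RGT_0.
  destruct (continuity_pt_ball cos (2 * PI * u) (e / 2) continuity_cos) as [d1 [Hd1 H1]]; [lra|].
  destruct (continuity_pt_ball sin (2 * PI * u) (e / 2) continuity_sin) as [d2 [Hd2 H2]]; [lra|].
  exists (Rmin d1 d2 / (2 * PI)). split; [apply Rdiv_lt_0_compat; [apply Rmin_pos|]; lra|].
  intros v Hv.
  assert (Harg : Rabs (2 * PI * v - 2 * PI * u) < Rmin d1 d2).
  { replace (2 * PI * v - 2 * PI * u) with ((2 * PI) * (v - u)) by ring.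
    rewrite Rabs_mult, (Rabs_right (2 * PI)) by lra.
    apply (Rmult_lt_reg_l (/ (2 * PI))); [apply Rinv_0_lt_compat; lra|].
    replace (/ (2 * PI) * (2 * PI * Rabs (v - u))) with (Rabs (v - u)) by (field; lra).
    replace (/ (2 * PI) * Rmin d1 d2) with (Rmin d1 d2 / (2 * PI)) by (field; lra). exact Hv. }
  eapply Rle_lt_trans; [apply Cnorm_le_abs|]. unfold ee, Csub; cbn [fst snd].
  pose proof (H1 _ (Rlt_le_trans _ _ _ Harg (Rmin_l _ _))).
  pose proof (H2 _ (Rlt_le_trans _ _ _ Harg (Rmin_r _ _))). lra.
Qed.

Lemma ccont_ee_lip (f : R * R -> R) p :
  (forall q, in_square q -> Rabs (f q - f p) <= 4 * sup_dist q p) ->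
  ccont in_square sup_dist (fun q => ee (f q)) p.
Proof.
  intros Hf e He. destruct (ee_cont (f p) e He) as [del [Hdel H]].
  exists (del / 4). split; [lra|]. intros q Hq Hqp. apply H. specialize (Hf q Hq). lra.
Qed.

Lemma cont_square_of_ccont d (H : R -> R -> nat -> Cx) :
  (forall i, (i < d)%nat -> forall p, in_square p ->
     ccont in_square sup_dist (fun q => H (fst q) (snd q) i) p) ->
  cont_square d H.
Proof.
  intros Hc i Hi s t Hs Ht e He.
  destruct (Hc i Hi (s, t) (conj Hs Ht) e He) as [del [Hdel Hq]].
  exists del. split; [exact Hdel|]. intros s' t' Hs' Ht' H1 H2.
  apply (Hq (s', t')); [split; auto|]. unfold sup_dist; cbn [fst snd]. now apply Rmax_lub_lt.
Qed.

Definition rescale (w z0 u Z A : Cx) : Cx := Cadd w (Cmul u (Cmul z0 (Cmul (Cinv Z) (Csub A w)))).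

Lemma rescale_diag w u v A : Cmul u v <> C0 -> rescale w v u (Cmul u v) A = A.
Proof.
  intro Huv. unfold rescale. rewrite Cmul_assoc, Cmul_Cinv_r by exact Huv. Cring.
Qed.

Lemma rescale_inj w z0 u Z A B : u <> C0 -> z0 <> C0 -> Z <> C0 ->
  rescale w z0 u Z A = rescale w z0 u Z B -> A = B.
Proof.
  intros Hu Hz0 HZ E. apply Cnorm_sub_eq0.
  assert (Hdiff : Csub (rescale w z0 u Z A) (rescale w z0 u Z B)
                  = Cmul u (Cmul z0 (Cmul (Cinv Z) (Csub A B)))) by (unfold rescale; Cring).
  rewrite E in Hdiff. apply (f_equal Cnorm) in Hdiff.
  rewrite Cnorm_sub_same, !Cnorm_mul, Cnorm_Cinv in Hdiff by exact HZ.
  pose proof (Cnorm_pos u Hu); pose proof (Cnorm_pos z0 Hz0); pose proof (Cnorm_pos Z HZ).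
  assert (0 < Cnorm u * (Cnorm z0 * / Cnorm Z))
    by (apply Rmult_lt_0_compat; [|apply Rmult_lt_0_compat; [|apply Rinv_0_lt_compat]]; lra).
  apply (Rmult_eq_reg_l (Cnorm u * (Cnorm z0 * / Cnorm Z))); [|lra].
  rewrite Rmult_0_r, Hdiff. ring.
Qed.

Lemma Cnorm_rescale_sub w z0 u Z A : Cnorm u = 1 -> Cnorm Z = Cnorm z0 -> Z <> C0 ->
  Cnorm (Csub (rescale w z0 u Z A) w) = Cnorm (Csub A w).
Proof.
  intros Hu HZ HZ0. unfold rescale.
  replace (Csub (Cadd w (Cmul u (Cmul z0 (Cmul (Cinv Z) (Csub A w))))) w)
    with (Cmul u (Cmul z0 (Cmul (Cinv Z) (Csub A w)))) by Cring.
  rewrite !Cnorm_mul, Cnorm_Cinv, Hu, <- HZ by exact HZ0.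
  pose proof (Cnorm_pos Z HZ0). field. lra.
Qed.

Lemma Cnorm_sub_sep x y w b :
  2 * Cnorm (Csub x w) < Cnorm (Csub b w) -> 2 * Cnorm (Csub y b) < Cnorm (Csub b w) -> x <> y.
Proof.
  intros Hx Hy ->. pose proof (Cnorm_triang_sub b y w).
  rewrite (Cnorm_sub_sym b y) in H. lra.
Qed.

Lemma inJb_iff m l i : inJb m l i = true <-> inJ m l i.
Proof. unfold inJb, inJ. rewrite Bool.andb_true_iff, Nat.leb_le, Nat.ltb_lt. tauto. Qed.

Lemma cluster1_constant_term d a m l :
  is_cluster d a (inJ m l) 1 -> forall i, inJ m l i -> a i O = a m O.
Proof.
  intros [_ [[i0 [_ [Hi0 _]]] [_ [Hpw _]]]] i Hi.
  destruct (Nat.eq_dec i m) as [->|Him]; [reflexivity|].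
  apply (Hpw i m Hi); [unfold inJ in *; lia | exact Him | lia].
Qed.

Section ClusterHomotopy.
Variables (d : nat) (a : nat -> nat -> Cx) (m l : nat) (w z0 : Cx) (eps r' : R).
Hypothesis Hconv : forall i, (i < d)%nat -> forall z, Cnorm z <= eps -> exists L, Cser_cv (a i) z L.
Hypothesis Hsep : forall i j, (i < d)%nat -> (j < d)%nat -> i <> j ->
  forall z, 0 < Cnorm z < eps -> psum (a i) z <> psum (a j) z.
Hypothesis Hw : forall i, inJ m l i -> a i O = w.
Hypothesis Hmu : forall z i, Cnorm z < r' -> (i < d)%nat ->
  forall k, (k < d)%nat -> ~ inJ m l k ->
    2 * Cnorm (Csub (psum (a i) z) (psum (a i) C0)) < Cnorm (Csub (psum (a k) C0) w).
Hypothesis Hr' : r' <= eps.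
Hypothesis Hz0_pos : 0 < Cnorm z0.
Hypothesis Hz0_lt : Cnorm z0 < r'.

Definition rot_point (p : R * R) : Cx := Cmul (ee (sq_beta p)) z0.

(* Since a_i = w + x c_i on J, the J-coordinate is w + e(alpha) z0 c_i(Z) with Z = e(beta) z0. *)
Definition cluster_homotopy (p : R * R) (i : nat) : Cx :=
  if inJb m l i then rescale w z0 (ee (sq_alpha p)) (rot_point p) (psum (a i) (rot_point p))
  else psum (a i) (rot_point p).

Lemma Cnorm_rot_point p : Cnorm (rot_point p) = Cnorm z0.
Proof. apply Cnorm_ee_mul. Qed.

Lemma rot_point_neq0 p : rot_point p <> C0.
Proof. apply Cnorm_neq0. rewrite Cnorm_rot_point. lra. Qed.

Lemma ccont_psum_rot_point i p : (i < d)%nat -> in_square p ->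
  ccont in_square sup_dist (fun q => psum (a i) (rot_point q)) p.
Proof.
  intros Hi Hp. apply (ccont_comp _ _ (fun z => Cnorm z <= Cnorm z0)).
  - intros q _. rewrite Cnorm_rot_point. lra.
  - apply (ccont_psum _ eps); [pose proof (Cnorm_ge0 z0); lra | auto |].
    rewrite Cnorm_rot_point. lra.
  - apply ccont_mul; [apply ccont_ee_lip; intros; apply sq_beta_lip; auto | apply ccont_const].
Qed.

Lemma cluster_homotopy_cont i p : (i < d)%nat -> in_square p ->
  ccont in_square sup_dist (fun q => cluster_homotopy q i) p.
Proof.
  intros Hi Hp. unfold cluster_homotopy, rescale.
  destruct (inJb m l i); [|now apply ccont_psum_rot_point].
  apply ccont_add; [apply ccont_const|]. apply ccont_mul.
  { apply ccont_ee_lip. intros; apply sq_alpha_lip; auto. }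
  apply ccont_mul; [apply ccont_const|]. apply ccont_mul.
  - apply (ccont_comp _ _ (fun z => Cnorm z = Cnorm z0)); [intros; apply Cnorm_rot_point | |].
    + apply ccont_Cinv_circle; [lra | apply Cnorm_rot_point].
    + apply ccont_mul; [apply ccont_ee_lip; intros; apply sq_beta_lip; auto | apply ccont_const].
  - apply ccont_sub; [now apply ccont_psum_rot_point | apply ccont_const].
Qed.

Lemma cluster_homotopy_sep_out p i k : (i < d)%nat -> (k < d)%nat -> inJ m l i -> ~ inJ m l k ->
  rescale w z0 (ee (sq_alpha p)) (rot_point p) (psum (a i) (rot_point p))
  <> psum (a k) (rot_point p).
Proof.
  intros Hi Hk HiJ HkJ. apply (Cnorm_sub_sep _ _ w (a k O)).
  - rewrite Cnorm_rescale_sub by (apply Cnorm_ee || apply Cnorm_rot_point || apply rot_point_neq0).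
    rewrite <- (psum_C0 (a k)). rewrite <- (Hw i HiJ) at 1. rewrite <- (psum_C0 (a i)).
    apply Hmu; [rewrite Cnorm_rot_point; lra | auto..].
  - rewrite <- (psum_C0 (a k)). apply Hmu; [rewrite Cnorm_rot_point; lra | auto..].
Qed.

Lemma cluster_homotopy_in_Yd p : in_Yd d (cluster_homotopy p).
Proof.
  intros i j Hi Hj Hij. unfold cluster_homotopy.
  assert (HZ : 0 < Cnorm (rot_point p) < eps) by (rewrite Cnorm_rot_point; lra).
  assert (HnJ : forall k, inJb m l k = false -> ~ inJ m l k)
    by (intros k Ek; rewrite <- inJb_iff, Ek; discriminate).
  destruct (inJb m l i) eqn:Ei, (inJb m l j) eqn:Ej.
  - intro E. apply (Hsep i j Hi Hj Hij _ HZ).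
    exact (rescale_inj _ _ _ _ _ _ (ee_neq0 _) (Cnorm_neq0 z0 ltac:(lra)) (rot_point_neq0 p) E).
  - apply cluster_homotopy_sep_out; [auto | auto | now apply inJb_iff | now apply HnJ].
  - intro E. symmetry in E. revert E.
    apply cluster_homotopy_sep_out; [auto | auto | now apply inJb_iff | now apply HnJ].
  - apply Hsep; auto.
Qed.

Lemma cluster_homotopy_diag p i : sq_alpha p = sq_beta p ->
  cluster_homotopy p i = a_loop a z0 (sq_alpha p) i.
Proof.
  intro Hab. unfold cluster_homotopy, a_loop, rot_point. rewrite <- Hab.
  destruct (inJb m l i); [|reflexivity].
  apply rescale_diag. rewrite Hab. apply rot_point_neq0.
Qed.

Lemma cluster_homotopy_s1 t i : in01 t -> (i < d)%nat ->
  cluster_homotopy (1, t) i = concat (lambda_loop a m l w z0) (c_loop a m l w z0) t i.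
Proof.
  intros Ht Hi. unfold concat, cluster_homotopy, lambda_loop, c_loop, rot_point, rescale.
  destruct (Rle_dec t (1 / 2)).
  - destruct (sq_edge_s1_first t ltac:(unfold in01 in *; lra)) as [-> ->].
    rewrite ee0, Cmul_1l. destruct (inJb m l i); [|reflexivity].
    rewrite Cmul_Cinv_r by (apply Cnorm_neq0; lra). reflexivity.
  - destruct (sq_edge_s1_second t ltac:(unfold in01 in *; lra)) as [-> ->].
    rewrite ee1, Cmul_1l. destruct (inJb m l i) eqn:Ei; [|reflexivity].
    rewrite psum_shift, (Hw i); [reflexivity | now apply inJb_iff | |].
    + apply Cnorm_neq0. rewrite Cnorm_ee_mul. lra.
    + apply Hconv; [exact Hi | rewrite Cnorm_ee_mul; lra].
Qed.

End ClusterHomotopy.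

Theorem mainTheorem5
  (d : nat) (a : nat -> nat -> Cx) (eps : R)
  (Hd : (2 <= d)%nat)
  (Hdistinct : forall i j, (i < d)%nat -> (j < d)%nat -> i <> j -> a i <> a j)
  (Heps : 0 < eps)
  (Hconv : forall i, (i < d)%nat -> forall z, Cnorm z <= eps -> exists L, Cser_cv (a i) z L)
  (Hsep : forall i j, (i < d)%nat -> (j < d)%nat -> i <> j ->
            forall z, 0 < Cnorm z < eps -> psum (a i) z <> psum (a j) z)
  (Horder : forall m0 i j n, (m0 < i)%nat -> (i <= j)%nat -> (j < d)%nat ->
            val_ge (a m0) (a j) n -> val_ge (a m0) (a i) n)
  (m l : nat)
  (HJ : is_cluster d a (inJ m l) 1)
  (r' : R) (Hr' : 0 < r' <= eps)
  (Hmu : forall z i, Cnorm z < r' -> (i < d)%nat ->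
           forall k, (k < d)%nat -> ~ inJ m l k ->
             2 * Cnorm (Csub (psum (a i) z) (psum (a i) C0))
               < Cnorm (Csub (psum (a k) C0) (a m O)))
  (z0 : Cx) (Hz0 : 0 < Cnorm z0 < r') :
  homotopic_rel d (a_loop a z0)
    (concat (lambda_loop a m l (a m O) z0) (c_loop a m l (a m O) z0)).
Proof.
  destruct Hz0 as [Hz0_pos Hz0_lt].
  pose proof (cluster1_constant_term d a m l HJ) as Hw.
  assert (Hr'_eps : r' <= eps) by lra.
  set (H := cluster_homotopy a m l (a m O) z0).
  assert (Hdiag : forall p i, sq_alpha p = sq_beta p -> H p i = a_loop a z0 (sq_alpha p) i)
    by (intros; now apply cluster_homotopy_diag).
  exists (fun s t => H (s, t)).
  split; [|split; [|split; [|split; [|split]]]].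
  - apply cont_square_of_ccont. intros i Hi [s t] Hp. eapply cluster_homotopy_cont; eauto.
  - intros s t _ _. eapply cluster_homotopy_in_Yd; eauto.
  - intros t i Ht _. destruct (sq_edge_s0 t Ht) as [Ha Hb]. now rewrite Hdiag, Ha; [|lra].
  - intros t i Ht Hi. eapply cluster_homotopy_s1; eauto.
  - intros s i Hs _. destruct (sq_edge_t0 s Hs) as [Ha Hb]. now rewrite Hdiag, Ha; [|lra].
  - intros s i Hs _. destruct (sq_edge_t1 s Hs) as [Ha Hb]. now rewrite Hdiag, Ha; [|lra].
Qed.
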